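(* For every finite domain $D$ and every finite family $\Gamma=\{(P_i,Q_i)\}$ of promise relations over $D$, the problem $\operatorname{PCSP}_R(\Gamma)$ is polynomial-time equivalent to $\operatorname{PCSP}(\Gamma)$.
   Context: A promise relation over $D$ is a pair $(P,Q)$ with $P\subseteq Q\subseteq D^k$. An instance of $\operatorname{PCSP}(\Gamma)$ on variables $x_1,\dots,x_n$ is a list of clauses, each consisting of some $(P,Q)\in\Gamma$ of arity $k$ and a $k$-tuple of variables (repetitions allowed); $\Psi_P$ (resp. $\Psi_Q$) is the conjunction of the $P$- (resp. corresponding $Q$-) constraints, with assignments ranging over $D^n$. $\operatorname{PCSP}(\Gamma)$ is the promise problem: output YES if $\Psi_P$ is satisfiable, NO if $\Psi_Q$ is unsatisfiable. $\operatorname{PCSP}_R(\Gamma)$ is the same promise problem restricted to instances in which no clause contains the same variable more than once. *)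

From mathcomp Require Import all_boot.
Set Implicit Arguments.
Unset Strict Implicit.
Unset Printing Implicit Defensive.

Record pr_family (D : finType) := PrFamily {
  pf_m : nat;
  pf_ar : 'I_pf_m -> nat;
  pf_P : forall i : 'I_pf_m, {set (pf_ar i).-tuple D};
  pf_Q : forall i : 'I_pf_m, {set (pf_ar i).-tuple D}
}.

Section Instances.
Variables (D : finType) (G : pr_family D).

Definition clause (n : nat) := {i : 'I_(pf_m G) & (@pf_ar D G i).-tuple 'I_n}.

Definition instance := {n : nat & seq (clause n)}.

Definition inst_n (I : instance) : nat := projT1 I.
Definition inst_cl (I : instance) : seq (clause (inst_n I)) := projT2 I.

Definition satP (I : instance) : Prop :=
  exists a : 'I_(inst_n I) -> D,
    forall c, c \in inst_cl I -> map_tuple a (projT2 c) \in @pf_P D G (projT1 c).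

Definition satQ (I : instance) : Prop :=
  exists a : 'I_(inst_n I) -> D,
    forall c, c \in inst_cl I -> map_tuple a (projT2 c) \in @pf_Q D G (projT1 c).

Definition no_repeats (I : instance) : Prop :=
  forall c, c \in inst_cl I -> uniq (projT2 c).

Definition enc_nat (k : nat) : seq bool := nseq k true ++ [:: false].

Definition enc_clause n (c : clause n) : seq bool :=
  enc_nat (val (projT1 c)) ++ flatten (map (fun v : 'I_n => enc_nat (val v)) (val (projT2 c))).

Definition enc_inst (I : instance) : seq bool :=
  enc_nat (inst_n I) ++ flatten (map (@enc_clause (inst_n I)) (inst_cl I)).

End Instances.

Record promise_problem := PromiseProblem {
  pp_yes : seq bool -> Prop;
  pp_no  : seq bool -> Prop
}.

Definition PCSP (D : finType) (G : pr_family D) : promise_problem :=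
  PromiseProblem (fun x => exists I : instance G, x = enc_inst I /\ satP I)
                 (fun x => exists I : instance G, x = enc_inst I /\ ~ satQ I).

Definition PCSP_R (D : finType) (G : pr_family D) : promise_problem :=
  PromiseProblem
    (fun x => exists I : instance G, [/\ x = enc_inst I, no_repeats I & satP I])
    (fun x => exists I : instance G, [/\ x = enc_inst I, no_repeats I & ~ satQ I]).

(* Machine model: deterministic single-tape Turing machines with       *)
(* finitely many states over the tape alphabet {0,1,blank}             *)
(* (blank = None).                                                     *)
Inductive move := MoveL | MoveR | Stay.

Record TM := MkTM {
  tm_nst : nat;  (* states are 'I_(tm_nst.+1); the start state is ord0 *)
  (* None = halt *)
  tm_delta : 'I_tm_nst.+1 -> option bool ->
             option ('I_tm_nst.+1 * option bool * move)
}.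

(* configuration: state, tape to the left of the head (nearest first),
   symbol under the head, tape to the right of the head *)
Record config (M : TM) := Config {
  cf_state : 'I_(tm_nst M).+1;
  cf_left : seq (option bool);
  cf_cur : option bool;
  cf_right : seq (option bool)
}.

Definition do_move (l : seq (option bool)) (s : option bool) (r : seq (option bool))
  (d : move) : seq (option bool) * option bool * seq (option bool) :=
  match d with
  | Stay => (l, s, r)
  | MoveL => match l with
             | [::] => ([::], None, s :: r)
             | a :: l' => (l', a, s :: r)
             end
  | MoveR => match r with
             | [::] => (s :: l, None, [::])
             | a :: r' => (s :: l, a, r')
             end
  end.

(* run M t c = Some c' iff M started in configuration c halts within t
   steps, in configuration c'. *)
Fixpoint run (M : TM) (t : nat) (c : config M) : option (config M) :=
  match tm_delta (cf_state c) (cf_cur c) with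
  | None => Some c
  | Some (q, w, d) =>
      match t with
      | 0 => None
      | t'.+1 =>
          let: (l, s, r) := do_move (cf_left c) w (cf_right c) d in
          run t' (Config q l s r)
      end
  end.

Definition init_config (M : TM) (x : seq bool) : config M :=
  match x with
  | [::] => Config ord0 [::] None [::]
  | b :: x' => Config ord0 [::] (Some b) (map Some x')
  end.

Fixpoint read_word (s : seq (option bool)) : seq bool :=
  match s with
  | Some b :: s' => b :: read_word s'
  | _ => [::]
  end.

Definition output (M : TM) (c : config M) : seq bool :=
  read_word (cf_cur c :: cf_right c).

Definition poly_time_computable (f : seq bool -> seq bool) : Prop :=
  exists (M : TM) (k : nat), forall x : seq bool,
    exists c : config M, run (size x ^ k + k) (init_config M x) = Some c
                         /\ output c = f x.

Definition pt_reduces (A B : promise_problem) : Prop :=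
  exists f : seq bool -> seq bool, poly_time_computable f /\
    (forall x, pp_yes A x -> pp_yes B (f x)) /\
    (forall x, pp_no A x -> pp_no B (f x)).

Definition pt_equivalent (A B : promise_problem) : Prop :=
  pt_reduces A B /\ pt_reduces B A.

(* PCSP_R(Γ) is the restriction of PCSP(Γ) to instances without a repeated
   variable in a clause, so the identity reduces it to PCSP(Γ).  Conversely,
   let [width] exceed every arity and [copies = (|D| + 1) * width].  Replace
   each variable v by its copies (v, j), j < copies, and each clause by its
   copies along all injective patterns σ : [0, width) -> [0, copies), the t-th
   variable v_t becoming (v_t, σ t); no clause of the new instance repeats a
   variable.  A P-solution lifts by forgetting the copy index.  Given a
   Q-solution b of the new instance, give v the most frequent value of b on
   its copies: it occurs on at least [width] of them, so a greedy choice gives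
   an injective σ along which b takes these majority values, and the
   Q-constraint of that copy of a clause is the original Q-constraint.
   On encodings the reduction is a fixed number of passes of finite-state
   transducers, one per pattern, which a single-tape machine simulates in
   quadratic time. *)

From HB Require Import structures.
From mathcomp Require Import all_boot zify.
Set Implicit Arguments.
Unset Strict Implicit.
Unset Printing Implicit Defensive.

Definition reaches (M : TM) (c c' : config M) (n : nat) :=
  forall t, run (n + t) c = run t c'.

Lemma reaches0 M (c : config M) : reaches c c 0.
Proof. by []. Qed.

Lemma reaches_trans M (c1 c2 c3 : config M) n1 n2 :
  reaches c1 c2 n1 -> reaches c2 c3 n2 -> reaches c1 c3 (n1 + n2).
Proof. by move=> h1 h2 t; rewrite -addnA h1 h2. Qed.

Lemma run_halted (M : TM) (c : config M) t :
  tm_delta (cf_state c) (cf_cur c) = None -> run t c = Some c.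
Proof. by case: t => [|t] /= ->. Qed.

Lemma run_eq_delta (M : TM) (q q' : 'I_(tm_nst M).+1) l s r t :
  tm_delta q s = tm_delta q' s -> tm_delta q s <> None ->
  run t (@Config M q l s r) = run t (Config q' l s r).
Proof. by move=> h; case: t => [|t] /=; rewrite -h; case: (tm_delta q s). Qed.

(* [cfg q l r]: [l] lists the cells left of the head, nearest first, and [r]
   the cells from the head on; cells beyond both lists are blank.  [cfgL]
   is the configuration after moving the head of [cfg q l r] one cell left. *)
Definition cfg (M : TM) q (l r : seq (option bool)) : config M :=
  Config q l (head None r) (behead r).

Definition cfgL (M : TM) q (l r : seq (option bool)) : config M :=
  cfg q (behead l) (head None l :: r).

Lemma reaches_stepR (M : TM) q l r q' w :
  tm_delta q (head None r) = Some (q', w, MoveR) ->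
  reaches (@cfg M q l r) (cfg q' (w :: l) (behead r)) 1.
Proof. by move=> hd t; rewrite add1n /= hd; case: r hd => [|a [|b r]]. Qed.

Lemma reaches_stepL (M : TM) q l r q' w :
  tm_delta q (head None r) = Some (q', w, MoveL) ->
  reaches (@cfg M q l r) (cfgL q' l (w :: behead r)) 1.
Proof. by move=> hd t; rewrite add1n /= hd; case: l. Qed.

Lemma read_word_blank_tail (x : seq bool) (r : seq (option bool)) :
  all (pred1 None) r -> read_word (map Some x ++ r) = x.
Proof. by elim: x => [|b x IH] /= h; [case: r h => [|[]] | rewrite IH]. Qed.

Lemma read_word_head_behead (s : seq (option bool)) :
  read_word (head None s :: behead s) = read_word s.
Proof. by case: s. Qed.

Lemma blank_head (r : seq (option bool)) : all (pred1 None) r -> head None r = None.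
Proof. by case: r => [|[]]. Qed.

Lemma blank_behead (r : seq (option bool)) : all (pred1 None) r -> all (pred1 None) (behead r).
Proof. by case: r => //= a r /andP[]. Qed.

Lemma catrev_map_rev (T U : Type) (f : T -> U) (v : seq T) R :
  catrev (map f (rev v)) R = map f v ++ R.
Proof. by rewrite catrevE map_rev revK. Qed.

Lemma mul_sq_le_pow (A n : nat) : A * n.+1 ^ 2 <= n ^ (4 * A + 4) + (4 * A + 4).
Proof.
case: n => [|n]; first by rewrite exp1n muln1 exp0n //; lia.
case: n => [|n]; first by rewrite exp1n; lia.
set m := n.+2.
have m_sq : m.+1 ^ 2 <= 4 * m ^ 2 by rewrite !expnS !expn0; nia.
have A_small : 4 * A < m ^ (4 * A + 2).
  have := ltn_expl (4 * A + 2) (isT : 1 < 2).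
  have : 2 ^ (4 * A + 2) <= m ^ (4 * A + 2) by rewrite leq_exp2r //; lia.
  lia.
have -> : m ^ (4 * A + 4) = m ^ (4 * A + 2) * m ^ 2 by rewrite -expnD -addnA.
apply: leq_trans (leq_addr _ _).
apply: (leq_trans (leq_mul (leqnn A) m_sq)); rewrite mulnA (mulnC A 4).
by apply: leq_mul => //; apply: ltnW.
Qed.

Section MultiPassTransducer.

Variables (Q : finType) (S B : nat).
Variable start : 'I_S.+1 -> Q.
Variable step : 'I_S.+1 -> Q -> bool -> Q * ('I_B * bool).

Definition emit (w : 'I_B * bool) : seq bool := nseq w.1 true ++ nseq w.2 false.

Fixpoint transduce p q (x : seq bool) : seq bool :=
  if x is b :: x' then emit (step p q b).2 ++ transduce p (step p q b).1 x' else [::].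

Definition final_state p q (x : seq bool) : Q := foldl (fun q b => (step p q b).1) q x.

Lemma transduce_cat p q x y :
  transduce p q (x ++ y) = transduce p q x ++ transduce p (final_state p q x) y.
Proof. by elim: x q => [|b x IH] q //=; rewrite IH catA. Qed.

Lemma transduce_cons p q b x :
  transduce p q (b :: x) = emit (step p q b).2 ++ transduce p (step p q b).1 x.
Proof. by []. Qed.

Lemma final_state_cons p q b x :
  final_state p q (b :: x) = final_state p (step p q b).1 x.
Proof. by []. Qed.

Lemma final_state_cat p q x y :
  final_state p q (x ++ y) = final_state p (final_state p q x) y.
Proof. exact: foldl_cat. Qed.

Definition transduce_upto j x :=
  flatten [seq transduce (inord i) (start (inord i)) x | i <- iota 0 j].

Lemma transduce_uptoS j x :
  transduce_upto j.+1 x = transduce_upto j x ++ transduce (inord j) (start (inord j)) x.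
Proof. by rewrite /transduce_upto -addn1 iotaD map_cat flatten_cat /= cats0. Qed.

Lemma size_transduce_upto_mono j k x :
  j <= k -> size (transduce_upto j x) <= size (transduce_upto k x).
Proof.
move=> /subnK <-; rewrite addnC /transduce_upto iotaD map_cat flatten_cat size_cat.
exact: leq_addr.
Qed.

Lemma size_transduce p q x : size (transduce p q x) <= B * size x.
Proof.
elim: x q => [|b x IH] q //=; rewrite size_cat mulnS leq_add //.
rewrite /emit size_cat !size_nseq.
by case: (step p q b).2 => a [] /=; have := ltn_ord a; lia.
Qed.

Lemma size_transduce_upto j x : size (transduce_upto j x) <= j * (B * size x).
Proof.
elim: j => [|j IH] //; rewrite transduce_uptoS size_cat mulSn addnC.
by rewrite leq_add // size_transduce.
Qed.

(* The tape holds the input, a blank, and the output produced so far.  To emit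
   a nonempty word, the machine blanks the scanned input cell, carries the
   symbol and the pending emission past the end of the output, writes the
   emission there, and returns to the blank to restore the symbol. *)
Inductive mstate :=
| Scan of 'I_S.+1 & Q
| CarryIn of 'I_S.+1 & Q & bool & ('I_B * bool)
| CarryOut of 'I_S.+1 & Q & bool & ('I_B * bool)
| ReturnOut of 'I_S.+1 & Q & bool
| ReturnIn of 'I_S.+1 & Q & bool
| Rewind of 'I_S.+1
| Stop.

Definition mstate_sum : finType :=
  ((((((('I_S.+1 * Q) + ('I_S.+1 * Q * bool * ('I_B * bool)))
  + ('I_S.+1 * Q * bool * ('I_B * bool))) + ('I_S.+1 * Q * bool))
  + ('I_S.+1 * Q * bool)) + 'I_S.+1) + unit)%type.

Definition sum_of_mstate (s : mstate) : mstate_sum :=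
  match s with
  | Scan p q => inl (inl (inl (inl (inl (inl (p, q))))))
  | CarryIn p q b w => inl (inl (inl (inl (inl (inr (p, q, b, w))))))
  | CarryOut p q b w => inl (inl (inl (inl (inr (p, q, b, w)))))
  | ReturnOut p q b => inl (inl (inl (inr (p, q, b))))
  | ReturnIn p q b => inl (inl (inr (p, q, b)))
  | Rewind p => inl (inr p)
  | Stop => inr tt
  end.

Definition mstate_of_sum (x : mstate_sum) : mstate :=
  match x with
  | inl (inl (inl (inl (inl (inl (p, q)))))) => Scan p q
  | inl (inl (inl (inl (inl (inr (p, q, b, w)))))) => CarryIn p q b w
  | inl (inl (inl (inl (inr (p, q, b, w))))) => CarryOut p q b w
  | inl (inl (inl (inr (p, q, b)))) => ReturnOut p q b
  | inl (inl (inr (p, q, b))) => ReturnIn p q b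
  | inl (inr p) => Rewind p
  | inr _ => Stop
  end.

Lemma sum_of_mstateK : cancel sum_of_mstate mstate_of_sum. Proof. by case. Qed.

HB.instance Definition _ := Finite.copy mstate (can_type sum_of_mstateK).

Definition start_state := Scan (inord 0) (start (inord 0)).

(* The start state of a [TM] is [ord0], so codes are shifted by one. *)
Definition encode (s : mstate) : 'I_#|{: mstate}|.+1 := lift ord0 (enum_rank s).

Definition decode (q : 'I_#|{: mstate}|.+1) : mstate :=
  if unlift ord0 q is Some j then enum_val j else start_state.

Lemma encodeK : cancel encode decode.
Proof. by move=> s; rewrite /decode /encode liftK enum_rankK. Qed.

Lemma decode0 : decode ord0 = start_state.
Proof. by rewrite /decode unlift_none. Qed.

Definition silent (w : 'I_B * bool) := (w.1 == 0 :> nat) && ~~ w.2.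

Lemma silent_emit w : silent w -> emit w = [::].
Proof. by case: w => a z /andP[/eqP]; rewrite /emit /= => ->; case: z. Qed.

Definition ord_decr (a : 'I_B) : 'I_B := Ordinal (leq_ltn_trans (leq_subr 1 a) (ltn_ord a)).

Definition mdelta (s : mstate) (c : option bool) : option (mstate * option bool * move) :=
  match s, c with
  | Scan p q, Some b =>
      if silent (step p q b).2 then Some (Scan p (step p q b).1, Some b, MoveR)
      else Some (CarryIn p (step p q b).1 b (step p q b).2, None, MoveR)
  | Scan p q, None =>
      if p == ord_max then Some (Stop, None, MoveR) else Some (Rewind p, None, MoveL)
  | CarryIn p q b w, Some c => Some (CarryIn p q b w, Some c, MoveR)
  | CarryIn p q b w, None => Some (CarryOut p q b w, None, MoveR)
  | CarryOut p q b w, Some c => Some (CarryOut p q b w, Some c, MoveR)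
  | CarryOut p q b w, None =>
      if 0 < w.1 then
        if silent (ord_decr w.1, w.2) then Some (ReturnOut p q b, Some true, MoveL)
        else Some (CarryOut p q b (ord_decr w.1, w.2), Some true, MoveR)
      else Some (ReturnOut p q b, Some false, MoveL)
  | ReturnOut p q b, Some c => Some (ReturnOut p q b, Some c, MoveL)
  | ReturnOut p q b, None => Some (ReturnIn p q b, None, MoveL)
  | ReturnIn p q b, Some c => Some (ReturnIn p q b, Some c, MoveL)
  | ReturnIn p q b, None => Some (Scan p q, Some b, MoveR)
  | Rewind p, Some c => Some (Rewind p, Some c, MoveL)
  | Rewind p, None => Some (Scan (inord p.+1) (start (inord p.+1)), None, MoveR)
  | Stop, _ => None
  end.

Definition machine_delta (q : 'I_#|{: mstate}|.+1) (c : option bool) :=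
  if mdelta (decode q) c is Some (s, w, d) then Some (encode s, w, d) else None.

Definition machine : TM := MkTM machine_delta.

Definition mcfg (s : mstate) l r : config machine := @cfg machine (encode s) l r.
Definition mcfgL (s : mstate) l r : config machine := @cfgL machine (encode s) l r.

Lemma mstepR s l r s' w :
  mdelta s (head None r) = Some (s', w, MoveR) ->
  reaches (mcfg s l r) (mcfg s' (w :: l) (behead r)) 1.
Proof. by move=> h; apply: reaches_stepR; rewrite /= /machine_delta encodeK h. Qed.

Lemma mstepL s l r s' w :
  mdelta s (head None r) = Some (s', w, MoveL) ->
  reaches (mcfg s l r) (mcfgL s' l (w :: behead r)) 1.
Proof. by move=> h; apply: reaches_stepL; rewrite /= /machine_delta encodeK h. Qed.

Lemma skip_right s l (v : seq bool) r :
  (forall c, mdelta s (Some c) = Some (s, Some c, MoveR)) ->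
  reaches (mcfg s l (map Some v ++ r)) (mcfg s (catrev (map Some v) l) r) (size v).
Proof.
move=> hs; elim: v l => [|c v IH] l /=; first exact: reaches0.
by rewrite -add1n; apply: reaches_trans (IH _); apply: mstepR; apply: hs.
Qed.

Lemma skip_left s l (v : seq bool) r :
  (forall c, mdelta s (Some c) = Some (s, Some c, MoveL)) ->
  reaches (mcfgL s (map Some v ++ l) r) (mcfgL s l (catrev (map Some v) r)) (size v).
Proof.
move=> hs; elim: v r => [|c v IH] r /=; first exact: reaches0.
by rewrite -add1n; apply: reaches_trans (IH _); apply: mstepL; apply: hs.
Qed.

Lemma append_emission p q b (w : 'I_B * bool) l r :
  ~~ silent w -> all (pred1 None) r ->
  exists u c r', [/\ emit w = rcons u c, all (pred1 None) r' &
    reaches (mcfg (CarryOut p q b w) l r)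
            (mcfgL (ReturnOut p q b) (catrev (map Some u) l) (Some c :: r')) (size (emit w))].
Proof.
case: w => a z; move: {2}(val a) (erefl (val a)) => n.
elim: n a l r => [|n IH] a l r ha hw hr.
  have hz : z by move: hw; rewrite /silent /= ha; case: z.
  exists [::], false, (behead r); split; rewrite ?blank_behead //.
  - by rewrite /emit /= ha hz.
  - by rewrite /emit /= ha hz /=; apply: mstepL; rewrite blank_head //= ha.
have hdecr : val (ord_decr a) = n by rewrite /= ha subn1.
case hs: (silent (ord_decr a, z)).
  have [hn hz] : n = 0 /\ z = false.
    move: hs; rewrite /silent [X in X == _]hdecr; clear IH hdecr ha hw.
    by case: z; case: n.
  subst z.
  exists [::], true, (behead r); split; rewrite ?blank_behead //.
  - by rewrite /emit /= ha hn.
  - by rewrite /emit /= ha hn /=; apply: mstepL; rewrite blank_head //= ha hs.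
have [u [c [r' [hu hr' e]]]] :=
  IH (ord_decr a) (Some true :: l) (behead r) hdecr (negbT hs) (blank_behead hr).
exists (true :: u), c, r'; split => //.
- by move: hu; rewrite /emit /= ha subn1 /= => ->.
- have -> : size (emit (a, z)) = 1 + size (emit (ord_decr a, z)) by rewrite /emit /= ha subn1.
  by apply: reaches_trans e; apply: mstepR; rewrite blank_head //= ha hs.
Qed.

(* The tape right of the input: a blank, [out], then blanks; initially empty. *)
Definition output_tape (out : seq bool) (R : seq (option bool)) :=
  exists2 r0, all (pred1 None) r0 &
  R = None :: map Some out ++ r0 \/ (out = [::] /\ R = [::]).

Lemma output_tape_blank out R : output_tape out R ->
  exists2 r0, all (pred1 None) r0 &
    forall s l, mcfg s l R = mcfg s l (None :: map Some out ++ r0).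
Proof. by case=> r0 hr0 [->|[-> ->]]; [exists r0 | exists [::]]. Qed.

Lemma scan_symbol p q b x l out R : output_tape out R ->
  exists n R', [/\ reaches (mcfg (Scan p q) l (map Some (b :: x) ++ R))
                           (mcfg (Scan p (step p q b).1) (Some b :: l) (map Some x ++ R')) n,
     output_tape (out ++ emit (step p q b).2) R' &
     n <= 4 + 2 * size x + 2 * size (out ++ emit (step p q b).2)].
Proof.
set q' := (step p q b).1; set w := (step p q b).2 => hR.
case hw: (silent w).
  exists 1, R; split; first by apply: mstepR; rewrite /= -/w hw.
  - by rewrite silent_emit ?cats0.
  - lia.
have [r0 hr0 hRc] := output_tape_blank hR.
set l1 := catrev (map Some x) (None :: l).
have e1 : reaches (mcfg (Scan p q) l (map Some (b :: x) ++ R))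
                  (mcfg (CarryIn p q' b w) (None :: l) (map Some x ++ R)) 1.
  by apply: mstepR; rewrite /= -/w hw.
have e2 : reaches (mcfg (CarryIn p q' b w) (None :: l) (map Some x ++ R))
                  (mcfg (CarryIn p q' b w) l1 (None :: map Some out ++ r0)) (size x).
  by rewrite -(hRc _ l1); apply: skip_right.
have e3 : reaches (mcfg (CarryIn p q' b w) l1 (None :: map Some out ++ r0))
                  (mcfg (CarryOut p q' b w) (None :: l1) (map Some out ++ r0)) 1.
  exact: mstepR.
have e4 : reaches (mcfg (CarryOut p q' b w) (None :: l1) (map Some out ++ r0))
            (mcfg (CarryOut p q' b w) (catrev (map Some out) (None :: l1)) r0) (size out).
  exact: skip_right.
have [u [c [r0' [hu hr0' e5]]]] :=
  append_emission p q' b (catrev (map Some out) (None :: l1)) (negbT hw) hr0.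
set R2 := map Some (out ++ u) ++ Some c :: r0'.
have e6 : reaches
    (mcfgL (ReturnOut p q' b) (catrev (map Some u) (catrev (map Some out) (None :: l1)))
       (Some c :: r0'))
    (mcfgL (ReturnOut p q' b) (None :: l1) R2) (size (out ++ u)).
  rewrite /R2 -catrev_catl -map_cat catrevE -map_rev -(catrev_map_rev Some (out ++ u)).
  by rewrite -(size_rev (out ++ u)); apply: skip_left.
have e7 : reaches (mcfgL (ReturnOut p q' b) (None :: l1) R2)
                  (mcfgL (ReturnIn p q' b) l1 (None :: R2)) 1.
  exact: mstepL.
have e8 : reaches (mcfgL (ReturnIn p q' b) l1 (None :: R2))
                  (mcfgL (ReturnIn p q' b) (None :: l) (map Some x ++ None :: R2)) (size x).
  rewrite /l1 catrevE -map_rev -(catrev_map_rev Some x) -(size_rev x).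
  exact: skip_left.
have e9 : reaches (mcfgL (ReturnIn p q' b) (None :: l) (map Some x ++ None :: R2))
                  (mcfg (Scan p q') (Some b :: l) (map Some x ++ None :: R2)) 1.
  exact: mstepR.
exists (1 + size x + 1 + size out + size (emit w) + size (out ++ u) + 1 + size x + 1).
exists (None :: R2); split.
- apply: (reaches_trans _ e9); apply: (reaches_trans _ e8); apply: (reaches_trans _ e7).
  apply: (reaches_trans _ e6); apply: (reaches_trans _ e5); apply: (reaches_trans _ e4).
  by apply: (reaches_trans _ e3); apply: reaches_trans e1 e2.
- by exists r0'; [|left; rewrite /R2 hu -cats1 !map_cat -!catA].
- by move: (congr1 size hu); rewrite !size_cat size_rcons; lia.
Qed.

Lemma scan_pass p q x l out R : output_tape out R ->
  exists n R', [/\ reaches (mcfg (Scan p q) l (map Some x ++ R))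
                           (mcfg (Scan p (final_state p q x)) (catrev (map Some x) l) R') n,
     output_tape (out ++ transduce p q x) R' &
     n <= size x * (4 + 2 * size x + 2 * size (out ++ transduce p q x))].
Proof.
elim: x q l out R => [|b x IH] q l out R hR.
  by exists 0, R; rewrite cats0; split => //; apply: reaches0.
have [n1 [R1 [e1 hR1 hn1]]] := scan_symbol p q b x l hR.
have [n2 [R2 [e2 hR2 hn2]]] := IH (step p q b).1 (Some b :: l) _ _ hR1.
exists (n1 + n2), R2; rewrite /= catA; split => //; first exact: reaches_trans e1 e2.
by move: hn1 hn2; rewrite !size_cat /=; nia.
Qed.

Lemma finish_last_pass q l out R : output_tape out R ->
  exists2 c, reaches (mcfg (Scan ord_max q) l R) c 1 &
    tm_delta (cf_state c) (cf_cur c) = None /\ output c = out.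
Proof.
case/output_tape_blank=> r0 hr0 ->.
exists (mcfg Stop (None :: l) (map Some out ++ r0)); first by apply: mstepR; rewrite /= eqxx.
split; first by rewrite /= /machine_delta encodeK.
by rewrite /output /mcfg /cfg read_word_head_behead read_word_blank_tail.
Qed.

Lemma rewind_pass p q x l out R :
  p != ord_max -> head None l = None -> output_tape out R ->
  exists2 R', output_tape out R' &
    reaches (mcfg (Scan p q) (catrev (map Some x) l) R)
            (mcfg (Scan (inord p.+1) (start (inord p.+1))) (None :: behead l)
                  (map Some x ++ R')) (size x + 2).
Proof.
move=> hp hl /output_tape_blank [r0 hr0 ->].
exists (None :: map Some out ++ r0); first by exists r0; last left.
set R' := None :: map Some out ++ r0.
have e1 : reaches (mcfg (Scan p q) (catrev (map Some x) l) R')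
                  (mcfgL (Rewind p) (catrev (map Some x) l) R') 1.
  by apply: mstepL; rewrite /= (negbTE hp).
have e2 : reaches (mcfgL (Rewind p) (catrev (map Some x) l) R')
                  (mcfgL (Rewind p) l (map Some x ++ R')) (size x).
  rewrite catrevE -map_rev -(catrev_map_rev Some x) -(size_rev x).
  exact: skip_left.
have e3 : reaches (mcfgL (Rewind p) l (map Some x ++ R'))
    (mcfg (Scan (inord p.+1) (start (inord p.+1))) (None :: behead l) (map Some x ++ R')) 1.
  by rewrite /mcfgL /cfgL hl; apply: mstepR.
rewrite (_ : size x + 2 = 1 + size x + 1); last by lia.
exact: reaches_trans (reaches_trans e1 e2) e3.
Qed.

Lemma run_passes x k j l R :
  j + k = S -> head None l = None -> output_tape (transduce_upto j x) R ->
  exists n c, [/\ reaches (mcfg (Scan (inord j) (start (inord j))) l (map Some x ++ R)) c n,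
    tm_delta (cf_state c) (cf_cur c) = None, output c = transduce_upto S.+1 x &
    n <= k.+1 * (size x * (4 + 2 * size x + 2 * size (transduce_upto S.+1 x)) + size x + 2)].
Proof.
elim: k j l R => [|k IH] j l R hjk hl hR;
  have [n1 [R1 [e1 hR1 hn1]]] := scan_pass (inord j) (start (inord j)) x l hR;
  rewrite -transduce_uptoS in hR1 hn1.
  have hj : j = S by rewrite -hjk addn0.
  have hmax : inord j = ord_max :> 'I_S.+1 by apply: val_inj; rewrite /= inordK hj.
  rewrite hmax in e1 *.
  have [c e2 [hc hout]] :=
    finish_last_pass (final_state ord_max (start ord_max) x) (catrev (map Some x) l) hR1.
  exists (n1 + 1), c; split => //; first exact: reaches_trans e1 e2.
    by rewrite hout hj.
  by move: hn1; rewrite hj; lia.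
have hjS : j < S by rewrite -hjk; lia.
have hp : inord j != ord_max :> 'I_S.+1.
  by apply/eqP => /(congr1 val); rewrite /= inordK; lia.
have [R2 hR2 e2] := rewind_pass (final_state (inord j) (start (inord j)) x) x hp hl hR1.
rewrite inordK in e2; last by lia.
have [n3 [c [e3 hc hout hn3]]] :=
  IH j.+1 (None :: behead l) R2 (etrans (addSnnS _ _) hjk) erefl hR2.
exists (n1 + (size x + 2) + n3), c; split => //.
  exact: reaches_trans (reaches_trans e1 e2) e3.
have : size (transduce_upto j.+1 x) <= size (transduce_upto S.+1 x).
  by apply: size_transduce_upto_mono; lia.
by move: hn1 hn3; nia.
Qed.

Lemma run_machine_init x t :
  run t (init_config machine x) = run t (mcfg start_state [::] (map Some x)).
Proof.
have -> : init_config machine x = cfg ord0 [::] (map Some x) by case: x.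
apply: run_eq_delta; rewrite /= /machine_delta decode0 ?encodeK //.
by rewrite /start_state /=; case: (head None _) => [b|]; [case: ifP | case: ifP].
Qed.

Theorem transduce_upto_poly_time : poly_time_computable (transduce_upto S.+1).
Proof.
set A := S.+1 * (6 + 2 * (S.+1 * B)).
exists machine, (4 * A + 4) => x.
have hR : output_tape (transduce_upto 0 x) [::] by exists [::]; last right.
have [n [c [e hc hout hn]]] := run_passes (l := [::]) (add0n S) erefl hR.
exists c; split => //.
have cost : n <= size x ^ (4 * A + 4) + (4 * A + 4).
  apply: leq_trans (mul_sq_le_pow A (size x)); apply: (leq_trans hn).
  have := size_transduce_upto S.+1 x; rewrite /A -mulnA leq_mul2l => hsize.
  by apply/orP; right; rewrite !expnS !expn0; nia.
by rewrite -(subnKC cost) run_machine_init -[map Some x]cats0 e run_halted.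
Qed.

End MultiPassTransducer.

Lemma sum_card_fibres (T U : finType) (f : T -> U) :
  \sum_(u : U) #|[set x | f x == u]| = #|T|.
Proof.
rewrite -sum1_card (partition_big f predT) //=.
by apply: eq_bigr => u _; rewrite -sum1_card; apply: eq_bigl => x; rewrite inE.
Qed.

Lemma card_fibre_arg_max (T U : finType) (f : T -> U) (u0 : U) :
  #|T| <= #|U| * #|[set x | f x == [arg max_(u > u0) #|[set x | f x == u]|]]|.
Proof.
case: arg_maxnP => //= u _ hmax.
by rewrite -(sum_card_fibres f) -sum_nat_const; apply: leq_sum => v _; apply: hmax.
Qed.

Lemma exists_injective_choice (T : finType) (x0 : T) K (A : 'I_K -> {set T}) :
  (forall t, K <= #|A t|) ->
  exists2 f : {ffun 'I_K -> T}, injective f & forall t, f t \in A t.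
Proof.
move=> hA.
have greedy k : k <= K -> exists s : seq T,
    [/\ size s = k, uniq s & forall t : 'I_K, t < k -> nth x0 s t \in A t].
  elim: k => [|k IH] hk; first by exists [::].
  have [s [hs hu hsA]] := IH (ltnW hk).
  have [x] : exists x, x \in A (Ordinal hk) :\: [set y in s].
    apply/set0Pn; rewrite -card_gt0 cardsD.
    have := subset_leq_card (subsetIr (A (Ordinal hk)) [set y in s]).
    have : #|[set y in s]| <= size s by rewrite cardsE card_size.
    by have := hA (Ordinal hk); lia.
  rewrite in_setD inE => /andP[xs xA].
  exists (rcons s x); split; [by rewrite size_rcons hs | by rewrite rcons_uniq xs hu |].
  move=> t ht; rewrite nth_rcons hs; case: ltnP => htk; first exact: hsA.
  have -> : t = Ordinal hk by apply: val_inj => /=; lia.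
  by rewrite /= eqxx.
have [s [hs hu hsA]] := greedy K (leqnn K).
exists [ffun t : 'I_K => nth x0 s t] => [t1 t2|t]; rewrite !ffunE; last exact: hsA.
by move/eqP; rewrite nth_uniq ?hs // => /eqP /val_inj.
Qed.

Section Blowup.
Variables (D : finType) (G : pr_family D).

Local Notation m := (pf_m G).
Local Notation ar := (@pf_ar D G).

Definition width := (\max_(i < m) ar i).+1.
Definition copies := #|D|.+1 * width.

Arguments width : simpl never.
Arguments copies : simpl never.

Lemma ar_lt_width i : ar i < width.
Proof. by rewrite ltnS; apply: (@leq_bigmax _ (fun i => ar i)). Qed.

Lemma copies_gt0 : 0 < copies.
Proof. by rewrite /copies muln_gt0. Qed.

Lemma width_le_copies : width <= copies.
Proof. by rewrite /copies leq_pmull. Qed.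

Definition copy_pattern := {ffun 'I_width -> 'I_copies}.

Definition npass := #|{: copy_pattern}|.-1.

Lemma card_copy_pattern : npass.+1 = #|{: copy_pattern}|.
Proof. by rewrite /npass prednK // card_ffun !card_ord expn_gt0 copies_gt0. Qed.

Definition copy0 : 'I_copies := Ordinal copies_gt0.

Definition pattern_of (p : 'I_npass.+1) : copy_pattern :=
  nth [ffun _ => copy0] (enum {: copy_pattern}) p.

Lemma map_pattern_of_iota :
  [seq pattern_of (inord i) | i <- iota 0 npass.+1] = enum {: copy_pattern}.
Proof.
rewrite -(mkseq_nth [ffun _ => copy0] (enum {: copy_pattern})) /mkseq -cardE.
rewrite -card_copy_pattern; apply/eq_in_map => i; rewrite mem_iota /= => hi.
by rewrite /pattern_of inordK.
Qed.

Lemma copy_lt n (v : 'I_n) (j : 'I_copies) : v * copies + j < n * copies.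
Proof. by have := ltn_ord v; have := ltn_ord j; nia. Qed.

Definition copy n (v : 'I_n) (j : 'I_copies) : 'I_(n * copies) := Ordinal (copy_lt v j).

Fixpoint copy_vars n (sg : copy_pattern) t0 (ws : seq 'I_n) : seq 'I_(n * copies) :=
  if ws is v :: ws' then copy v (sg (inord t0)) :: copy_vars sg t0.+1 ws' else [::].

Lemma size_copy_vars n sg t0 (ws : seq 'I_n) : size (copy_vars sg t0 ws) = size ws.
Proof. by elim: ws t0 => [|v ws IH] t0 //=; rewrite IH. Qed.

Definition copy_tuple n sg k (vs : k.-tuple 'I_n) : k.-tuple 'I_(n * copies) :=
  @Tuple k _ (copy_vars sg 0 vs)
    (introT eqP (etrans (size_copy_vars sg 0 vs) (size_tuple vs))).

Definition copy_clause n (sg : copy_pattern) (c : clause G n) : clause G (n * copies) :=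
  existT (fun i => (ar i).-tuple 'I_(n * copies)) (projT1 c) (copy_tuple sg (projT2 c)).

Definition copy_clauses n (sg : copy_pattern) (cl : seq (clause G n)) :=
  if injectiveb sg then map (copy_clause sg) cl else [::].

Definition blowup (I : instance G) : instance G :=
  existT (fun n => seq (clause G n)) (inst_n I * copies)
    (flatten [seq copy_clauses sg (inst_cl I) | sg <- enum {: copy_pattern}]).

(* States of the transducer reading [enc_inst]: [Header] reads [1^n 0]; for
   each clause, [InRel i] reads the unary relation index and [InVar i t] the
   [t]-th variable [v], written back as its copy [v * copies + pattern t].
   [Dead] swallows the rest of the input, so that a pass with a non-injective
   pattern writes nothing; only pass [0] writes the header. *)
Inductive bstate := Dead | Header | InRel of 'I_m.+1 | InVar of 'I_m & 'I_width.

Definition bstate_sum (q : bstate) : option (option ('I_m.+1 + ('I_m * 'I_width))) :=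
  match q with
  | Dead => None
  | Header => Some None
  | InRel i => Some (Some (inl i))
  | InVar i t => Some (Some (inr (i, t)))
  end.

Definition sum_bstate (x : option (option ('I_m.+1 + ('I_m * 'I_width)))) : bstate :=
  match x with
  | None => Dead
  | Some None => Header
  | Some (Some (inl i)) => InRel i
  | Some (Some (inr (i, t))) => InVar i t
  end.

Lemma bstate_sumK : cancel bstate_sum sum_bstate. Proof. by case. Qed.

HB.instance Definition _ := Finite.copy bstate (can_type bstate_sumK).

Definition blowup_step (p : 'I_npass.+1) (q : bstate) (b : bool) :
    bstate * ('I_copies.+1 * bool) :=
  match q with
  | Dead => (Dead, (ord0, false))
  | Header =>
      if b then (Header, (if p == 0 :> nat then ord_max else ord0, false))
      else (if injectiveb (pattern_of p) then InRel ord0 else Dead, (ord0, p == 0 :> nat))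
  | InRel i =>
      if b then (if i.+1 < m then InRel (inord i.+1) else Dead, (inord 1, false))
      else (if insub (val i) is Some i' then
              if 0 < ar i' then InVar i' (inord 0) else InRel ord0
            else Dead, (ord0, true))
  | InVar i t =>
      if b then (InVar i t, (ord_max, false))
      else (if t.+1 < ar i then InVar i (inord t.+1) else InRel ord0,
            (widen_ord (leqnSn copies) (pattern_of p t), true))
  end.

Definition blowup_enc := transduce_upto (fun _ => Header) blowup_step npass.+1.

Lemma blowup_enc_poly_time : poly_time_computable blowup_enc.
Proof. exact: transduce_upto_poly_time. Qed.

Local Notation btrans := (transduce blowup_step).
Local Notation bfinal := (final_state blowup_step).

Lemma emit_max : emit (ord_max : 'I_copies.+1, false) = nseq copies true.
Proof. by rewrite /emit cats0. Qed.

Lemma header_ones p k :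
  btrans p Header (nseq k true) = (if p == 0 :> nat then nseq (k * copies) true else [::]) /\
  bfinal p Header (nseq k true) = Header.
Proof.
elim: k => [|k [IH1 IH2]]; first by case: (p == 0 :> nat).
split; last by rewrite /= IH2.
by rewrite [btrans _ _ _]/= IH1; case: ifP => _ //; rewrite emit_max mulSn nseqD.
Qed.

Lemma header_enc p n :
  btrans p Header (enc_nat n) = (if p == 0 :> nat then enc_nat (n * copies) else [::]) /\
  bfinal p Header (enc_nat n) = if injectiveb (pattern_of p) then InRel ord0 else Dead.
Proof.
have [h1 h2] := header_ones p n.
by rewrite /enc_nat transduce_cat final_state_cat h1 h2 /=; case: (p == 0 :> nat).
Qed.

Lemma dead_enc p x : btrans p Dead x = [::] /\ bfinal p Dead x = Dead.
Proof. by elim: x. Qed.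

Lemma rel_ones p (i : nat) k : i + k < m ->
  btrans p (InRel (inord i)) (nseq k true) = nseq k true /\
  bfinal p (InRel (inord i)) (nseq k true) = InRel (inord (i + k)).
Proof.
elim: k i => [|k IH] i hik; first by rewrite addn0.
have hi : i < m.+1 by lia.
rewrite /= inordK // (_ : i.+1 < m) ?addnS; last by lia.
have [-> ->] := IH i.+1 ltac:(lia).
by rewrite /emit /= inordK ?ltnS ?copies_gt0 // addSn.
Qed.

Lemma var_ones p i t k :
  btrans p (InVar i t) (nseq k true) = nseq (k * copies) true /\
  bfinal p (InVar i t) (nseq k true) = InVar i t.
Proof.
elim: k => [|k [IH1 IH2]] //; split; last by rewrite /= IH2.
change (nseq k.+1 true) with (true :: nseq k true).
by rewrite transduce_cons IH1 emit_max mulSn nseqD.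
Qed.

Lemma var_enc p i t v : t < ar i ->
  btrans p (InVar i (inord t)) (enc_nat v) = enc_nat (v * copies + pattern_of p (inord t)) /\
  bfinal p (InVar i (inord t)) (enc_nat v) =
    if t.+1 < ar i then InVar i (inord t.+1) else InRel ord0.
Proof.
move=> ht; have htw : t < width by apply: ltn_trans (ar_lt_width i).
have [h1 h2] := var_ones p i (inord t) v.
rewrite /enc_nat transduce_cat final_state_cat h1 h2 /= inordK //; split => //.
by rewrite /emit /= cats0 nseqD -catA.
Qed.

Lemma vars_enc p n i (ws : seq 'I_n) t0 : t0 + size ws = ar i -> 0 < size ws ->
  btrans p (InVar i (inord t0)) (flatten (map (fun v : 'I_n => enc_nat v) ws)) =
    flatten (map (fun v : 'I_(n * copies) => enc_nat v) (copy_vars (pattern_of p) t0 ws)) /\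
  bfinal p (InVar i (inord t0)) (flatten (map (fun v : 'I_n => enc_nat v) ws)) = InRel ord0.
Proof.
elim: ws t0 => [|v ws IH] t0 //= hs _.
have [h1 h2] := var_enc p v (ltac:(lia) : t0 < ar i).
rewrite transduce_cat final_state_cat h1 h2.
case: ws IH hs => [|v' ws] IH /= hs; first by rewrite ifF; [split | lia].
rewrite ifT; last by lia.
by have [h3 h4] := IH t0.+1 ltac:(rewrite /=; lia) isT; rewrite /= in h3 h4; rewrite h3 h4.
Qed.

Lemma clause_enc p n (c : clause G n) :
  btrans p (InRel ord0) (enc_clause c) = enc_clause (copy_clause (pattern_of p) c) /\
  bfinal p (InRel ord0) (enc_clause c) = InRel ord0.
Proof.
case: c => i vs; rewrite /enc_clause /copy_clause /=.
have h0 : (ord0 : 'I_m.+1) = inord 0 by apply: val_inj; rewrite /= inordK.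
have [h1 h2] := @rel_ones p 0 i (ltn_ord i).
have hst : blowup_step p (InRel (inord i)) false =
    (if 0 < ar i then InVar i (inord 0) else InRel ord0, (ord0, true)).
  have e : val (inord i : 'I_m.+1) = val i by exact: inordK (ltnW (ltn_ord i)).
  by rewrite /= e valK.
set vars := flatten _.
have -> : enc_nat i ++ vars = nseq i true ++ false :: vars by rewrite /enc_nat -catA.
rewrite h0 transduce_cat final_state_cat h1 h2 add0n transduce_cons final_state_cons hst -h0.
rewrite (_ : emit (ord0, true) = [:: false]) // catA.
case: (posnP (ar i)) => hai.
  have e : val vs = [::] by apply/size0nil; rewrite size_tuple.
  by rewrite /vars e /= cats0.
have hs : 0 + size vs = ar i by rewrite size_tuple.
by have [-> ->] := vars_enc p hs (ltac:(by rewrite size_tuple) : 0 < size vs).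
Qed.

Lemma clauses_enc p n (cl : seq (clause G n)) :
  btrans p (InRel ord0) (flatten (map (@enc_clause D G n) cl)) =
    flatten (map (@enc_clause D G (n * copies)) (map (copy_clause (pattern_of p)) cl)) /\
  bfinal p (InRel ord0) (flatten (map (@enc_clause D G n) cl)) = InRel ord0.
Proof.
elim: cl => [|c cl [IH1 IH2]] //=.
have [h1 h2] := clause_enc p c.
by rewrite transduce_cat final_state_cat h1 h2 IH1 IH2.
Qed.

Lemma pass_enc p I :
  btrans p Header (enc_inst I) =
    (if p == 0 :> nat then enc_nat (inst_n I * copies) else [::]) ++
    flatten (map (@enc_clause D G _) (copy_clauses (pattern_of p) (inst_cl I))).
Proof.
have [h1 h2] := header_enc p (inst_n I).
rewrite /enc_inst transduce_cat h1 h2 /copy_clauses; congr (_ ++ _).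
case: (injectiveb (pattern_of p)).
  by have [-> _] := clauses_enc p (inst_cl I).
by have [-> _] := dead_enc p (flatten (map (@enc_clause D G _) (inst_cl I))).
Qed.

Lemma flatten_map_flatten (A B : Type) (f : A -> seq B) (L : seq (seq A)) :
  flatten (map f (flatten L)) = flatten (map (fun l => flatten (map f l)) L).
Proof. by elim: L => [|l L IH] //=; rewrite map_cat flatten_cat IH. Qed.

Lemma blowup_encE I : blowup_enc (enc_inst I) = enc_inst (blowup I).
Proof.
rewrite /blowup_enc /transduce_upto.
set body := fun sg => flatten (map (@enc_clause D G _) (copy_clauses sg (inst_cl I))).
have -> : [seq btrans (inord i) Header (enc_inst I) | i <- iota 0 npass.+1] =
    (enc_nat (inst_n I * copies) ++ body (pattern_of (inord 0)))
      :: [seq body (pattern_of (inord i)) | i <- iota 1 npass].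
  rewrite /= pass_enc inordK //; congr (_ :: _).
  apply/eq_in_map => i; rewrite mem_iota => /andP[hi1 hi2].
  rewrite pass_enc inordK; last by lia.
  by rewrite ifF //; apply/negbTE; rewrite -lt0n.
rewrite /= -catA /enc_inst /blowup /=; congr (_ ++ _).
by rewrite flatten_map_flatten -map_pattern_of_iota -!map_comp.
Qed.

Lemma mem_blowup I c' : c' \in inst_cl (blowup I) ->
  exists (sg : copy_pattern) c, [/\ injectiveb sg, c \in inst_cl I & c' = copy_clause sg c].
Proof.
case/flatten_mapP => sg _; rewrite /copy_clauses; case: ifP => // hinj /mapP[c hc ->].
by exists sg, c.
Qed.

Lemma copy_clause_in_blowup I (sg : copy_pattern) c :
  injectiveb sg -> c \in inst_cl I -> copy_clause sg c \in inst_cl (blowup I).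
Proof.
move=> hinj hc; apply/flatten_mapP; exists sg; first by rewrite mem_enum.
by rewrite /copy_clauses hinj map_f.
Qed.

Lemma copy_mod n (v : 'I_n) j : copy v j %% copies = j.
Proof. by rewrite /= modnMDl modn_small. Qed.

Lemma copy_div_lt n (y : 'I_(n * copies)) : y %/ copies < n.
Proof. by rewrite ltn_divLR ?copies_gt0. Qed.

Definition original_var n (y : 'I_(n * copies)) : 'I_n := Ordinal (copy_div_lt y).

Lemma copyK n (v : 'I_n) j : original_var (copy v j) = v.
Proof. by apply: val_inj; rewrite /= divnMDl ?copies_gt0 // divn_small // addn0. Qed.

Lemma map_original_var_copy_vars n (a : 'I_n -> D) sg t0 ws :
  map (fun y => a (original_var y)) (copy_vars sg t0 ws) = map a ws.
Proof. by elim: ws t0 => [|v ws IH] t0 //=; rewrite copyK IH. Qed.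

Lemma mem_copy_vars_mod n sg t0 (ws : seq 'I_n) y : y \in copy_vars sg t0 ws ->
  exists2 t, t0 <= t < t0 + size ws & y %% copies = sg (inord t).
Proof.
elim: ws t0 => [|v ws IH] t0 //=; rewrite inE => /orP[/eqP ->|].
  by exists t0; [rewrite leqnn /=; lia | rewrite copy_mod].
by move/IH => [t ht hy]; exists t => //; lia.
Qed.

Lemma copy_vars_uniq n (sg : copy_pattern) t0 (ws : seq 'I_n) :
  injective sg -> t0 + size ws <= width -> uniq (copy_vars sg t0 ws).
Proof.
move=> hinj; elim: ws t0 => [|v ws IH] t0 //= hs.
rewrite IH ?andbT; last by lia.
apply/negP => /mem_copy_vars_mod[t ht]; rewrite copy_mod => /val_inj /hinj /(congr1 val).
have [ht0 htw] : t0 < width /\ t < width by lia.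
by rewrite /= !inordK //; lia.
Qed.

Lemma blowup_no_repeats I : no_repeats (blowup I).
Proof.
move=> c' /mem_blowup[sg [[i vs] [hinj hc ->]]] /=.
apply: copy_vars_uniq; first exact/injectiveP.
by rewrite size_tuple add0n ltnW // ar_lt_width.
Qed.

Lemma blowup_satP I : satP I -> satP (blowup I).
Proof.
case=> a ha; exists (fun y => a (original_var y)).
move=> c' /mem_blowup[sg [[i vs] [hinj hc ->]]] /=.
have -> : map_tuple (fun y => a (original_var y)) (copy_tuple sg vs) = map_tuple a vs.
  by apply: val_inj; rewrite /= map_original_var_copy_vars.
exact: ha hc.
Qed.

Definition majority n (b : 'I_(n * copies) -> D) (v : 'I_n) : D :=
  [arg max_(d > b (copy v copy0)) #|[set j | b (copy v j) == d]|].

(* Since [copies = (#|D| + 1) * width], the most frequent value among the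
   copies of [v] occurs on at least [width] of them. *)
Lemma width_le_majority n (b : 'I_(n * copies) -> D) v :
  width <= #|[set j | b (copy v j) == majority b v]|.
Proof.
have := card_fibre_arg_max (fun j => b (copy v j)) (b (copy v copy0)).
rewrite card_ord /copies -/(majority b v); set y := #|_|.
rewrite mulSn; nia.
Qed.

Lemma map_copy_vars_agree n (b : 'I_(n * copies) -> D) (a : 'I_n -> D)
    (sg : copy_pattern) t0 ws :
  (forall t v, nth None (map Some ws) t = Some v -> b (copy v (sg (inord (t0 + t)))) = a v) ->
  map b (copy_vars sg t0 ws) = map a ws.
Proof.
elim: ws t0 => [|v ws IH] t0 //= h.
rewrite -(h 0 v) ?addn0 //; congr (_ :: _); apply: IH => t v' ht.
by rewrite addSnnS; apply: h.
Qed.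

Lemma satQ_of_blowup I : satQ (blowup I) -> satQ I.
Proof.
case=> b hb; exists (majority b); case=> i vs hc /=.
pose A (t : 'I_width) := if nth None (map Some (val vs)) t is Some v
  then [set j | b (copy v j) == majority b v] else setT.
have hA t : width <= #|A t|.
  rewrite /A; case: nth => [v|]; first exact: width_le_majority.
  by rewrite cardsT card_ord width_le_copies.
have [sg hinj hsg] := exists_injective_choice copy0 hA.
have := hb _ (copy_clause_in_blowup (introT (injectiveP _) hinj) hc).
suff -> : map_tuple b (copy_tuple sg vs) = map_tuple (majority b) vs by [].
apply: val_inj; apply: map_copy_vars_agree => t v ht.
have htw : t < width.
  have : t < size (map Some (val vs)).
    by rewrite ltnNge; apply/negP => h; rewrite nth_default in ht.
  by rewrite size_map size_tuple => h; apply: ltn_trans (ar_lt_width i).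
by have := hsg (inord t); rewrite /A inordK // ht inE add0n => /eqP.
Qed.

End Blowup.

Definition id_machine : TM := @MkTM 0 (fun _ _ => None).

Lemma id_poly_time : poly_time_computable id.
Proof.
exists id_machine, 1 => x; exists (init_config id_machine x); split; first exact: run_halted.
by case: x => [|b x] //=; rewrite -[RHS](@read_word_blank_tail (b :: x) [::]) ?cats0.
Qed.

Theorem theoremC1 (D : finType) (G : pr_family D)
  (HPQ : forall i : 'I_(pf_m G), @pf_P D G i \subset @pf_Q D G i) :
  pt_equivalent (PCSP_R G) (PCSP G).
Proof.
(* [HPQ] only makes the promise problems well posed; the reductions ignore it. *)
split.
  exists id; split; first exact: id_poly_time.
  by split=> x [I [-> _ hI]]; exists I.
exists (blowup_enc G); split; first exact: blowup_enc_poly_time.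
split=> x [I [-> hI]]; exists (blowup I); split.
- exact: blowup_encE.
- exact: blowup_no_repeats.
- exact: blowup_satP.
- exact: blowup_encE.
- exact: blowup_no_repeats.
- by move/satQ_of_blowup.
Qed.
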